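(* Let $(E\to M,\rho,\langle\cdot,\cdot\rangle,[\cdot,\cdot])$ be a Courant algebroid, $\mathcal{G}$ a generalized metric on $E$ and $D$ a generalized connection on $E$ compatible with $\mathcal{G}$ (i.e. $D\mathcal{G}=0$). Then the total generalized Ricci curvature satisfies $\mathrm{Ric}=\mathrm{Ric}^+_{\mathrm{GF}}+\mathrm{Ric}^-_{\mathrm{GF}}$, i.e. for all $a,b\in\Gamma(E)$, \[\mathrm{Ric}(a,b)=\mathrm{Ric}^+_{\mathrm{GF}}(a_-,b_+)+\mathrm{Ric}^-_{\mathrm{GF}}(a_+,b_-).\]
   Context: A Courant algebroid $(E\to M,\rho,\langle\cdot,\cdot\rangle,[\cdot,\cdot])$ consists of a vector bundle $E$, a nondegenerate symmetric bilinear form, an anchor $\rho:E\to TM$ and a bracket on $\Gamma(E)$ with $[a,[b,c]]=[[a,b],c]+[b,[a,c]]$, $\mathcal{L}_{\rho a}\langle b,c\rangle=\langle[a,b],c\rangle+\langle b,[a,c]\rangle$, $2[a,a]=\rho^*d\langle a,a\rangle$. A generalized connection is a linear $D:\Gamma(E)\to\Gamma(E^*\otimes E)$ with $D(fa)=fDa+\rho^*df\otimes a$ and $\rho^*d\langle a,b\rangle=\langle Da,b\rangle+\langle a,Db\rangle$; $D_ba:=(Da)(b)$. Naive curvature: $\mathcal{R}_0(a,b)c:=D_aD_bc-D_bD_ac-D_{[a,b]}c$. A generalized metric is a self-adjoint $\mathcal{G}\in\operatorname{End}E$ with $\mathcal{G}^2=1$; $V_\pm=\ker(\mathcal{G}\mp1)$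 and $x_\pm:=\tfrac12(1\pm\mathcal{G})x$. $D$ compatible with $\mathcal{G}$ means $D$ preserves $\Gamma(V_\pm)$. The total curvature is $\mathcal{R}(a,b):=\mathcal{R}_0(a_+,b_-)+\mathcal{R}_0(a_-,b_+)\in\operatorname{End}E$, and the total generalized Ricci curvature is $\mathrm{Ric}(a,b):=$ trace of the endomorphism $c\mapsto\mathcal{R}(c,a)b$ of $E$. For compatible $D$, $\mathrm{Ric}^\pm_{\mathrm{GF}}(a_\mp,b_\pm)$ is the trace of the endomorphism $V_\pm\to V_\pm$, $c_\pm\mapsto\mathcal{R}_0(c_\pm,a_\mp)b_\pm$. *)

(* Courant algebroids are modelled algebraically through their
   module of sections: A plays the role of C^oo(M) (a commutative R-algebra,
   R the reals), V the role of Gamma(E) (an A-module). *)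
From HB Require Import structures.
From mathcomp Require Import all_boot all_order all_algebra.
From mathcomp Require Import reals.
Set Implicit Arguments. Unset Strict Implicit. Unset Printing Implicit Defensive.
Import Order.TTheory GRing.Theory Num.Theory.
Local Open Scope ring_scope.

Section CourantDefs.
Variables (R : realType) (A : comAlgType R) (V : lmodType A).

(* rho a : the vector field rho(a), acting on functions as a derivation *)
Definition anchor_axioms (rho : V -> A -> A) : Prop :=
  [/\ forall a f g, rho a (f * g) = f * rho a g + g * rho a f,
      forall a (r : R) f g, rho a (r *: f + g) = r *: rho a f + rho a g
    & forall f a b g, rho (f *: a + b) g = f * rho a g + rho b g].

(* nondegenerate symmetric C^oo(M)-bilinear pairing on sections, inducing
   Gamma(E) ~= Gamma(E dual) *)
Definition pairing_axioms (pair : V -> V -> A) : Prop :=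
  [/\ forall a b, pair a b = pair b a,
      forall f a b c, pair (f *: a + b) c = f * pair a c + pair b c,
      forall a, (forall c, pair a c = 0) -> a = 0
    & forall phi : V -> A, (forall f x y, phi (f *: x + y) = f * phi x + phi y) ->
        exists a, forall c, pair a c = phi c].

(* rsd f = rho^* d f, identified with a section of E via the pairing *)
Definition rsd_axiom (rho : V -> A -> A) (pair : V -> V -> A) (rsd : A -> V) : Prop :=
  forall f c, pair (rsd f) c = rho c f.

Definition bracket_axioms (rho : V -> A -> A) (pair : V -> V -> A)
    (br : V -> V -> V) (rsd : A -> V) : Prop :=
  [/\
      (forall (r : R) a a' b, br ((r%:A : A) *: a + a') b = (r%:A : A) *: br a b + br a' b)
      /\ (forall (r : R) a b b', br a ((r%:A : A) *: b + b') = (r%:A : A) *: br a b + br a b'),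
      (forall a b c, br a (br b c) = br (br a b) c + br b (br a c)),
      (forall a b c, rho a (pair b c) = pair (br a b) c + pair b (br a c))
    & (forall a, br a a *+ 2 = rsd (pair a a))].

Definition courant_algebroid (rho : V -> A -> A) (pair : V -> V -> A)
    (br : V -> V -> V) (rsd : A -> V) : Prop :=
  [/\ anchor_axioms rho, pairing_axioms pair, rsd_axiom rho pair rsd
    & bracket_axioms rho pair br rsd].

Definition generalized_metric (pair : V -> V -> A) (G : V -> V) : Prop :=
  [/\ forall f x y, G (f *: x + y) = f *: G x + G y,
      forall a b, pair (G a) b = pair a (G b)
    & forall a, G (G a) = a].

Definition Vplus (G : V -> V) (x : V) : Prop := G x = x.
Definition Vminus (G : V -> V) (x : V) : Prop := G x = - x.

Definition pplus (G : V -> V) (x : V) : V := ((2^-1 : R)%:A : A) *: (x + G x).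
Definition pminus (G : V -> V) (x : V) : V := ((2^-1 : R)%:A : A) *: (x - G x).

(* generalized connection, written  D b a = D_b a = (D a)(b) *)
Definition generalized_connection (rho : V -> A -> A) (pair : V -> V -> A)
    (D : V -> V -> V) : Prop :=
  [/\ forall f b c a, D (f *: b + c) a = f *: D b a + D c a,
      forall b a a', D b (a + a') = D b a + D b a',
      forall b f a, D b (f *: a) = f *: D b a + rho b f *: a
    & forall c a b, rho c (pair a b) = pair (D c a) b + pair a (D c b)].

Definition compatible (G : V -> V) (D : V -> V -> V) : Prop :=
  (forall b x, Vplus G x -> Vplus G (D b x)) /\
  (forall b x, Vminus G x -> Vminus G (D b x)).

Definition naive_curv (br : V -> V -> V) (D : V -> V -> V) (a b c : V) : V :=
  D a (D b c) - D b (D a c) - D (br a b) c.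

Definition total_curv (br : V -> V -> V) (D : V -> V -> V) (G : V -> V) (a b c : V) : V :=
  naive_curv br D (pplus G a) (pminus G b) c + naive_curv br D (pminus G a) (pplus G b) c.

(* finite dual basis (e_i, phi_i) of the module of sections of a subbundle S
   (S = E, V_+ or V_-): phi_i are C^oo(M)-linear on S and x = sum_i phi_i(x) e_i *)
Definition dual_basis (S : V -> Prop) (n : nat) (e : 'I_n -> V) (phi : 'I_n -> V -> A) : Prop :=
  [/\ forall i, S (e i),
      forall i f x y, S x -> S y -> phi i (f *: x + y) = f * phi i x + phi i y
    & forall x, S x -> x = \sum_(i < n) phi i x *: e i].

Definition dtrace (n : nat) (e : 'I_n -> V) (phi : 'I_n -> V -> A) (g : V -> V) : A :=
  \sum_(i < n) phi i (g (e i)).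

Definition Ric (br : V -> V -> V) (D : V -> V -> V) (G : V -> V)
    (n : nat) (e : 'I_n -> V) (phi : 'I_n -> V -> A) (a b : V) : A :=
  dtrace e phi (fun c => total_curv br D G c a b).

(* Ric^+_GF(a_-, b_+) = tr_{V_+} (c_+ |-> R_0(c_+, a_-) b_+) ; am in V_-, bp in V_+ *)
Definition RicGF_plus (br : V -> V -> V) (D : V -> V -> V)
    (n : nat) (e : 'I_n -> V) (phi : 'I_n -> V -> A) (am bp : V) : A :=
  dtrace e phi (fun c => naive_curv br D c am bp).

(* Ric^-_GF(a_+, b_-) = tr_{V_-} (c_- |-> R_0(c_-, a_+) b_-) ; ap in V_+, bm in V_- *)
Definition RicGF_minus (br : V -> V -> V) (D : V -> V -> V)
    (n : nat) (e : 'I_n -> V) (phi : 'I_n -> V -> A) (ap bm : V) : A :=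
  dtrace e phi (fun c => naive_curv br D c ap bm).

End CourantDefs.

(* Since V_+ and V_- are orthogonal, for c in V_+ the bracket [f c, a_-] has no
   anomalous term rho^* d<c, a_-> f, so c |-> R_0(c, a_-) b is C^oo(M)-linear on V_+.
   The trace over E of c |-> R_0(c_+, a_-) b, i.e. of N o P with P the projection
   onto V_+, therefore equals the trace over V_+ of P o N, and P commutes with
   R_0(c, a_-) because D commutes with G; this is Ric^+_GF(a_-, b_+).  The V_- half
   of Ric is the V_+ half for the generalized metric -G. *)
From HB Require Import structures.
From mathcomp Require Import all_boot all_order all_algebra.
From mathcomp Require Import reals.
From mathcomp Require Import ring.
Import Order.TTheory GRing.Theory Num.Theory.
Local Open Scope ring_scope.
Set Implicit Arguments. Unset Strict Implicit.

Section Modules.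
Variables (R : realType) (A : comAlgType R).

Definition linear_of (W W' : lmodType A) (f : W -> W') (fL : linear f) : {linear W -> W'} :=
  HB.pack f (GRing.isLinear.Build A W W' *:%R f fL).

Lemma linear_sumZ (W W' : lmodType A) (f : W -> W') (I : Type) (r : seq I)
    (g : I -> A) (x : I -> W) :
  linear f -> f (\sum_(i <- r) g i *: x i) = \sum_(i <- r) g i *: f (x i).
Proof.
move=> fL; rewrite [LHS](linear_sum (linear_of fL)).
by apply: eq_bigr => i _; exact: (linearZ_LR (linear_of fL) (g i) (x i)).
Qed.

Lemma scalar_sumZ (W : lmodType A) (f : W -> A) (I : Type) (r : seq I)
    (g : I -> A) (x : I -> W) :
  scalar f -> f (\sum_(i <- r) g i *: x i) = \sum_(i <- r) g i * f (x i).
Proof. exact: (@linear_sumZ W A^o). Qed.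

Lemma scalarD (W : lmodType A) (f : W -> A) : scalar f -> {morph f : x y / x + y}.
Proof. by move=> fL; exact: (linearD (linear_of (W' := A^o) fL)). Qed.

Lemma scalarZ (W : lmodType A) (f : W -> A) a v : scalar f -> f (a *: v) = a * f v.
Proof. by move=> fL; exact: (linearZ_LR (linear_of (W' := A^o) fL)). Qed.

Lemma scalarN (W : lmodType A) (f : W -> A) : scalar f -> {morph f : x / - x}.
Proof. by move=> fL; exact: (linearN (linear_of (W' := A^o) fL)). Qed.

Lemma scalarB (W : lmodType A) (f : W -> A) : scalar f -> {morph f : x y / x - y}.
Proof. by move=> fL; exact: (linearB (linear_of (W' := A^o) fL)). Qed.

Lemma morphD_eq0 (U W : zmodType) (f : U -> W) : {morph f : x y / x + y} -> f 0 = 0.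
Proof. by move=> fD; apply: (addrI (f 0)); rewrite -fD !addr0. Qed.

Lemma morphDN (U W : zmodType) (f : U -> W) : {morph f : x y / x + y} -> {morph f : x / - x}.
Proof. by move=> fD x; apply: (addrI (f x)); rewrite -fD !subrr morphD_eq0. Qed.

Lemma half_double (W : lmodType A) (v : W) : ((2^-1 : R)%:A : A) *: (v *+ 2) = v.
Proof.
have two_alg : (2%:R : A) = (2 : R)%:A by rewrite scaler_nat.
by rewrite -scaler_nat two_alg scalerA -scalerAl mul1r scalerA mulVf ?pnatr_eq0 // !scale1r.
Qed.

Lemma double_inj (W : lmodType A) (u v : W) : u *+ 2 = v *+ 2 -> u = v.
Proof. by move=> h; rewrite -[u]half_double h half_double. Qed.

Lemma oppr_fix0 (W : lmodType A) (v : W) : v = - v -> v = 0.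
Proof. by move=> vN; apply: double_inj; rewrite mul0rn mulr2n {2}vN subrr. Qed.

Lemma morph_half (W W' : lmodType A) (f : W -> W') (v : W) :
  {morph f : x y / x + y} -> f ((2^-1 : R)%:A *: v) = (2^-1 : R)%:A *: f v.
Proof.
move=> fD; rewrite -{2}[v]half_double -scalerMnr.
by rewrite mulr2n fD -mulr2n half_double.
Qed.

End Modules.

Section DualBasis.
Variables (R : realType) (A : comAlgType R) (V : lmodType A).

Lemma dual_basis_scalar n (e : 'I_n -> V) (phi : 'I_n -> V -> A) :
  dual_basis (fun _ => True) e phi -> forall i, scalar (phi i).
Proof. by case=> _ phiZ _ i f x y; apply: phiZ. Qed.

Lemma dtraceD n (e : 'I_n -> V) (phi : 'I_n -> V -> A) (g h : V -> V) :
  dual_basis (fun _ => True) e phi ->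
  dtrace e phi (fun c => g c + h c) = dtrace e phi g + dtrace e phi h.
Proof.
move=> /dual_basis_scalar phiZ; rewrite -big_split; apply: eq_bigr => i _.
exact: (scalarD (phiZ i) _ _).
Qed.

Lemma eq_dual_basis (S S' : V -> Prop) n (e : 'I_n -> V) (phi : 'I_n -> V -> A) :
  (forall x, S x <-> S' x) -> dual_basis S e phi -> dual_basis S' e phi.
Proof.
move=> SS' [eS phiZ span]; split=> [i | i f x y /SS' Sx /SS' Sy | x /SS' Sx].
- exact/SS'.
- exact: phiZ.
- exact: span.
Qed.

Lemma dtrace_comp_proj (S : V -> Prop) (P N : V -> V)
    n (e : 'I_n -> V) (phi : 'I_n -> V -> A) m (es : 'I_m -> V) (phs : 'I_m -> V -> A) :
  dual_basis (fun _ => True) e phi -> dual_basis S es phs ->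
  linear P -> (forall x, S (P x)) -> (forall x, S x -> P x = x) -> linear (N \o P) ->
  dtrace e phi (N \o P) = dtrace es phs (P \o N).
Proof.
move=> he [esS phsZ es_span] PL PS Pid NPL.
have phiZ := dual_basis_scalar he; case: he => _ _ e_span.
have phsPZ j : scalar (phs j \o P) by move=> f x y; rewrite /= PL phsZ.
have NP_expand i : N (P (e i)) = \sum_(j < m) phs j (P (e i)) *: N (es j).
  have -> : N (P (e i)) = (N \o P) (\sum_(j < m) phs j (P (e i)) *: es j).
    by rewrite /= -(es_span _ (PS (e i))) (Pid _ (PS (e i))).
  by rewrite (linear_sumZ _ _ _ NPL); apply: eq_bigr => j _; rewrite /= (Pid _ (esS j)).
rewrite /dtrace (eq_bigr _ (fun i _ => congr1 (phi i) (NP_expand i))).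
under eq_bigr do rewrite (scalar_sumZ _ _ _ (phiZ _)).
rewrite exchange_big; apply: eq_bigr => j _ /=.
rewrite {2}(e_span (N (es j)) I) [RHS](scalar_sumZ _ _ _ (phsPZ j)).
by apply: eq_bigr => i _; rewrite mulrC.
Qed.

End DualBasis.

Section Projections.
Variables (R : realType) (A : comAlgType R) (V : lmodType A).

Lemma pplusDpminus (G : V -> V) (x : V) : pplus G x + pminus G x = x.
Proof. by rewrite -scalerDr addrACA subrr addr0 -mulr2n half_double. Qed.

Lemma pplusBpminus (G : V -> V) (x : V) : pplus G x - pminus G x = G x.
Proof. by rewrite -scalerBr (addrC x) addrKA opprK -mulr2n half_double. Qed.

Lemma Vplus_opp (G : V -> V) (x : V) : Vplus (fun y => - G y) x <-> Vminus G x.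
Proof. by rewrite /Vplus /Vminus; split=> [Gx | ->]; rewrite ?opprK // -[in RHS]Gx opprK. Qed.

Lemma Vminus_opp (G : V -> V) (x : V) : Vminus (fun y => - G y) x <-> Vplus G x.
Proof. by rewrite /Vplus /Vminus; split=> [/oppr_inj | ->]. Qed.

Lemma pminus_opp (G : V -> V) (x : V) : pminus (fun y => - G y) x = pplus G x.
Proof. by rewrite /pminus opprK. Qed.

End Projections.

Section CourantAlgebroid.
Variables (R : realType) (A : comAlgType R) (V : lmodType A).
Variables (rho : V -> A -> A) (pair : V -> V -> A) (br : V -> V -> V) (rsd : A -> V).
Hypothesis hC : courant_algebroid rho pair br rsd.

Lemma anchorD a : {morph rho a : f g / f + g}.
Proof. by case: hC => -[_ rhoZ _] _ _ _ f g; rewrite -[f]scale1r rhoZ !scale1r. Qed.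

Lemma anchorM a f g : rho a (f * g) = f * rho a g + g * rho a f.
Proof. by case: hC => -[]. Qed.

Lemma pairC a b : pair a b = pair b a.
Proof. by case: hC => _ []. Qed.

Lemma pair_scalar c : scalar (pair^~ c).
Proof. by case: hC => _ [_ pairZ _ _] _ _ f a b; apply: pairZ. Qed.

Lemma pairNl a c : pair (- a) c = - pair a c.
Proof. exact: (scalarN (pair_scalar c)). Qed.

Lemma pairNr a c : pair a (- c) = - pair a c.
Proof. by rewrite pairC pairNl pairC. Qed.

Lemma pairDr a : {morph pair a : b b' / b + b'}.
Proof. by move=> b b'; rewrite !(pairC a) (scalarD (pair_scalar a)). Qed.

Lemma pairZl f a c : pair (f *: a) c = f * pair a c.
Proof. exact: (scalarZ f a (pair_scalar c)). Qed.

Lemma eq_pair u v : (forall c, pair u c = pair v c) -> u = v.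
Proof.
case: hC => _ [_ _ nondeg _] _ _ uv; apply/eqP; rewrite -subr_eq0; apply/eqP.
by apply: nondeg => c; rewrite (scalarB (pair_scalar c)) uv subrr.
Qed.

Lemma rsdP f c : pair (rsd f) c = rho c f.
Proof. by case: hC. Qed.

Lemma rsdD : {morph rsd : f g / f + g}.
Proof.
by move=> f g; apply: eq_pair => c; rewrite (scalarD (pair_scalar c)) !rsdP anchorD.
Qed.

Lemma rsd0 : rsd 0 = 0.
Proof. exact: morphD_eq0 rsdD. Qed.

Lemma brDl b : {morph br^~ b : a a' / a + a'}.
Proof. by case: hC => _ _ _ [[brZ _] _ _ _] a a'; have := brZ 1 a a' b; rewrite !scale1r. Qed.

Lemma brDr a : {morph br a : b b' / b + b'}.
Proof. by case: hC => _ _ _ [[_ brZ] _ _ _] b b'; have := brZ 1 a b b'; rewrite !scale1r. Qed.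

Lemma br_invariant a b c : rho a (pair b c) = pair (br a b) c + pair b (br a c).
Proof. by case: hC => _ _ _ []. Qed.

Lemma brZr a f b : br a (f *: b) = f *: br a b + rho a f *: b.
Proof.
apply: eq_pair => c; have := br_invariant a (f *: b) c.
rewrite pairZl anchorM br_invariant (scalarD (pair_scalar c)) !pairZl => h.
by apply: (addIr (f * pair b (br a c))); rewrite -h; ring.
Qed.

Lemma br_addC a b : br a b + br b a = rsd (pair a b).
Proof.
case: hC => _ _ _ [_ _ _ br_sq]; have := br_sq (a + b).
rewrite brDl !brDr [br b a + _]addrC addrACA mulrnDl [(_ + _) *+ 2]mulrnDl !br_sq.
rewrite (scalarD (pair_scalar _)) !pairDr (pairC b a) !rsdD => polar.
apply: double_inj; apply: (addrI (rsd (pair a a) + rsd (pair b b))).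
by rewrite polar [rsd (pair a b) + rsd (pair b b)]addrC addrACA mulr2n.
Qed.

Lemma brZl_orth f x z : pair x z = 0 -> br (f *: x) z = f *: br x z - rho z f *: x.
Proof.
move=> xz0; have skew u v : br u v = rsd (pair u v) - br v u by rewrite -br_addC addrK.
rewrite skew pairZl xz0 mulr0 rsd0 sub0r brZr skew pairC xz0 rsd0 sub0r.
by rewrite scalerN opprD opprK.
Qed.

Section Metric.
Context {G : V -> V} (hG : generalized_metric pair G).

Lemma metric_linear : linear G.
Proof. by case: hG. Qed.

Lemma metricD : {morph G : x y / x + y}.
Proof. exact: (linearD (linear_of metric_linear)). Qed.

Lemma metricB : {morph G : x y / x - y}.
Proof. exact: (linearB (linear_of metric_linear)). Qed.

Lemma metricZ f x : G (f *: x) = f *: G x.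
Proof. exact: (linearZ_LR (linear_of metric_linear)). Qed.

Lemma metricK : involutive G.
Proof. by case: hG. Qed.

Lemma metric_selfadj a b : pair (G a) b = pair a (G b).
Proof. by case: hG. Qed.

Lemma pplus_linear : linear (pplus G).
Proof.
move=> f x y.
by rewrite /pplus metric_linear !scalerDr !scalerA mulrC addrACA.
Qed.

Lemma Vplus_pplus x : Vplus G (pplus G x).
Proof. by rewrite /Vplus /pplus metricZ metricD metricK addrC. Qed.

Lemma pplus_id x : Vplus G x -> pplus G x = x.
Proof. by rewrite /pplus => ->; rewrite -mulr2n half_double. Qed.

Lemma Vplus_Vminus_orth x z : Vplus G x -> Vminus G z -> pair x z = 0.
Proof.
move=> Gx Gz; apply: (@oppr_fix0 _ _ A^o).
by rewrite -{1}Gx metric_selfadj Gz pairNr.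
Qed.

Lemma pplus_comm (f : V -> V) : {morph f : x y / x + y} ->
  (forall w, f (G w) = G (f w)) -> forall w, f (pplus G w) = pplus G (f w).
Proof. by move=> fD fG w; rewrite /pplus morph_half // fD fG. Qed.

End Metric.

Lemma metric_opp (G : V -> V) :
  generalized_metric pair G -> generalized_metric pair (fun x => - G x).
Proof.
move=> hG; split=> [f x y | a b | a].
- by rewrite (metric_linear hG) opprD scalerN.
- by rewrite pairNl pairNr metric_selfadj.
- by rewrite (morphDN (metricD hG)) opprK metricK.
Qed.

Lemma Vminus_pminus (G : V -> V) (x : V) : generalized_metric pair G -> Vminus G (pminus G x).
Proof. by move/metric_opp/Vplus_pplus/(_ x)/Vplus_opp. Qed.

Variable D : V -> V -> V.
Hypothesis hD : generalized_connection rho pair D.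

Lemma cov_linear a : linear (D^~ a).
Proof. by case: hD => DL _ _ _ f b c; apply: DL. Qed.

Lemma covDr b : {morph D b : a a' / a + a'}.
Proof. by move=> a a'; case: hD. Qed.

Lemma covBr b : {morph D b : a a' / a - a'}.
Proof. by move=> a a'; rewrite covDr (morphDN (covDr b)). Qed.

Lemma covZr b f a : D b (f *: a) = f *: D b a + rho b f *: a.
Proof. by case: hD. Qed.

Lemma covBl a : {morph D^~ a : b c / b - c}.
Proof. exact: (linearB (linear_of (cov_linear a))). Qed.

Lemma covZl a f b : D (f *: b) a = f *: D b a.
Proof. exact: (linearZ_LR (linear_of (cov_linear a))). Qed.

Lemma naive_curvE a b c :
  naive_curv br D a b c = D a (D b c) - (D (br a b) c + D b (D a c)).
Proof. by rewrite (addrC (D (br a b) c)) opprD addrA. Qed.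

Lemma naive_curvDr a b : {morph naive_curv br D a b : c c' / c + c'}.
Proof. by move=> c c'; rewrite !naive_curvE !covDr addrACA opprD addrACA. Qed.

Lemma naive_curv_linear_orth f x y z w : pair x z = 0 ->
  naive_curv br D (f *: x + y) z w = f *: naive_curv br D x z w + naive_curv br D y z w.
Proof.
move=> xz0.
have Dz_expand : D z (D (f *: x + y) w) =
    rho z f *: D x w + (f *: D z (D x w) + D z (D y w)).
  by rewrite cov_linear covDr covZr addrAC addrC.
have Dbr_expand : D (br (f *: x + y) z) w =
    (f *: D (br x z) w + D (br y z) w) - rho z f *: D x w.
  by rewrite brDl brZl_orth // addrAC covBl cov_linear covZl.
rewrite !naive_curvE cov_linear Dz_expand Dbr_expand subrKA.
by rewrite addrACA -scalerDr opprD addrACA -scalerBr.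
Qed.

Lemma compatible_opp (G : V -> V) : compatible G D -> compatible (fun y => - G y) D.
Proof.
case=> Dplus Dminus; split=> b x.
- by move/Vplus_opp/(Dminus b)/Vplus_opp.
- by move/Vminus_opp/(Dplus b)/Vminus_opp.
Qed.

Section Compatible.
Context {G : V -> V} (hG : generalized_metric pair G) (hDG : compatible G D).

Lemma compatible_cov_comm b w : D b (G w) = G (D b w).
Proof.
case: hDG => Dplus Dminus.
rewrite -(pplusBpminus G w) covBr -[in RHS](pplusDpminus G w) covDr (metricD hG).
by rewrite (Dplus _ _ (Vplus_pplus hG w)) (Dminus _ _ (Vminus_pminus w hG)).
Qed.

Lemma naive_curv_comm a b w : naive_curv br D a b (G w) = G (naive_curv br D a b w).
Proof. by rewrite /naive_curv !compatible_cov_comm !(metricB hG). Qed.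

Lemma dtrace_naive_curv_pplus n (e : 'I_n -> V) (phi : 'I_n -> V -> A)
    np (ep : 'I_np -> V) (php : 'I_np -> V -> A) a b :
  dual_basis (fun _ => True) e phi -> dual_basis (Vplus G) ep php ->
  dtrace e phi (fun c => naive_curv br D (pplus G c) (pminus G a) b) =
    RicGF_plus br D ep php (pminus G a) (pplus G b).
Proof.
move=> he hep.
rewrite (dtrace_comp_proj (N := fun c => naive_curv br D c (pminus G a) b) he hep).
- apply: eq_bigr => j _ /=.
  by rewrite (pplus_comm (naive_curvDr _ _) (naive_curv_comm _ _)).
- exact: pplus_linear.
- exact: Vplus_pplus.
- exact: pplus_id.
move=> f x y /=; rewrite (pplus_linear hG) naive_curv_linear_orth //.
exact: Vplus_Vminus_orth (Vplus_pplus hG x) (Vminus_pminus a hG).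
Qed.

End Compatible.

Lemma dtrace_naive_curv_pminus (G : V -> V) n (e : 'I_n -> V) (phi : 'I_n -> V -> A)
    nm (em : 'I_nm -> V) (phm : 'I_nm -> V -> A) a b :
  generalized_metric pair G -> compatible G D ->
  dual_basis (fun _ => True) e phi -> dual_basis (Vminus G) em phm ->
  dtrace e phi (fun c => naive_curv br D (pminus G c) (pplus G a) b) =
    RicGF_minus br D em phm (pplus G a) (pminus G b).
Proof.
move=> hG hDG he /(eq_dual_basis (fun x => iff_sym (Vplus_opp G x))) hem.
rewrite -(pminus_opp G a).
exact: (dtrace_naive_curv_pplus (metric_opp hG) (compatible_opp hDG) _ _ he hem).
Qed.

End CourantAlgebroid.

Theorem lemma4p3 (R : realType) (A : comAlgType R) (V : lmodType A)
    (rho : V -> A -> A) (pair : V -> V -> A) (br : V -> V -> V) (rsd : A -> V)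
    (G : V -> V) (D : V -> V -> V)
    (hC : courant_algebroid rho pair br rsd)
    (hG : generalized_metric pair G)
    (hD : generalized_connection rho pair D)
    (hDG : compatible G D)
    (n : nat) (e : 'I_n -> V) (phi : 'I_n -> V -> A)
    (he : dual_basis (fun _ => True) e phi)
    (np : nat) (ep : 'I_np -> V) (php : 'I_np -> V -> A)
    (hep : dual_basis (Vplus G) ep php)
    (nm : nat) (em : 'I_nm -> V) (phm : 'I_nm -> V -> A)
    (hem : dual_basis (Vminus G) em phm) :
  forall a b : V,
    Ric br D G e phi a b =
      RicGF_plus br D ep php (pminus G a) (pplus G b)
      + RicGF_minus br D em phm (pplus G a) (pminus G b).
Proof.
move=> a b; rewrite /Ric /total_curv (dtraceD _ _ he).
rewrite (dtrace_naive_curv_pplus hC hD hG hDG _ _ he hep).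
by rewrite (dtrace_naive_curv_pminus hC hD _ _ hG hDG he hem).
Qed.
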